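(* Let $n\ge 2$, $V=\{1,\dots,n\}$, and let $\mathcal{E}$ be the edge set of $K_n$. Let $h:\mathbb{Z}_{\ge0}\to\mathbb{R}$ be non-decreasing, concave, with $h(0)=0$, and let $F(E)=\sum_{v\in V}h(d_E(v))$ for $E\subseteq\mathcal{E}$, where $d_E(v)$ is the degree of $v$ in $(V,E)$. Identify a real symmetric $n\times n$ matrix's off-diagonal part with a vector $X=(X_{ij})_{\{i,j\}\in\mathcal{E}}\in\mathbb{R}^{\mathcal{E}}$ and let $\mathrm{Supp}(X)=\{\{i,j\}\in\mathcal{E}: X_{ij}\neq 0\}$. For each $i\in V$, let $|X_{i,(0)}|\ge |X_{i,(1)}|\ge\dots\ge |X_{i,(n-2)}|$ be the absolute values of the $n-1$ entries $X_{ij}$, $j\neq i$, sorted in non-increasing order. Then the convex envelope (largest convex minorant) of the function $X\mapsto F(\mathrm{Supp}(X))$ on the unit $\ell_\infty$ ball $\{X\in\mathbb{R}^{\mathcal{E}}:\max_{\{i,j\}}|X_{ij}|\le 1\}$ is $$\Omega(X)=\sum_{i=1}^{n}\sum_{k=0}^{n-2}\big(h(k+1)-h(k)\big)\,|X_{i,(k)}|,$$ which equals the Lovász extension of $F$ evaluated at $|X|=(|X_{ij}|)$. In particular $\Omega$ is convex and piecewise linear.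
   Context: The Lovász extension of a set function $F$ on a finite ground set $\mathcal{E}$ with $F(\emptyset)=0$ is $f(w)=\sum_{k=1}^{m} w_{j_k}\big(F(\{j_1,\dots,j_k\})-F(\{j_1,\dots,j_{k-1}\})\big)$ for $w\in\mathbb{R}^{\mathcal{E}}$, where $m=|\mathcal{E}|$ and $w_{j_1}\ge\dots\ge w_{j_m}$ is a non-increasing ordering of the coordinates. *)

From HB Require Import structures.
From mathcomp Require Import all_boot all_order all_algebra.
Set Implicit Arguments. Unset Strict Implicit. Unset Printing Implicit Defensive.
Import Order.TTheory GRing.Theory Num.Theory.
Local Open Scope ring_scope.

(* Edges of K_n on vertex set 'I_n: unordered pairs {i,j}, i<>j, encoded as (i,j) with i<j. *)
Definition edge (n : nat) := {p : 'I_n * 'I_n | (nat_of_ord p.1 < nat_of_ord p.2)%N}.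

Definition deg (n : nat) (E : {set edge n}) (v : 'I_n) : nat :=
  #|[set e in E | ((val e).1 == v) || ((val e).2 == v)]|.

Definition Fdeg (R : numDomainType) (n : nat) (h : nat -> R) (E : {set edge n}) : R :=
  \sum_(v : 'I_n) h (deg E v).

Definition supp (R : numDomainType) (n : nat) (X : edge n -> R) : {set edge n} :=
  [set e | X e != 0].

(* entry X_{ij} of the symmetric matrix (0 on the diagonal) *)
Definition entry (R : numDomainType) (n : nat) (X : edge n -> R) (i j : 'I_n) : R :=
  if (nat_of_ord i < nat_of_ord j)%N then oapp X 0 (insub (i, j) : option (edge n))
  else oapp X 0 (insub (j, i) : option (edge n)).

Definition sorted_row (R : numDomainType) (n : nat) (X : edge n -> R) (i : 'I_n) : seq R :=
  sort (fun a b : R => b <= a) [seq `|entry X i j| | j <- enum 'I_n & j != i].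

Definition Omega (R : numDomainType) (n : nat) (h : nat -> R) (X : edge n -> R) : R :=
  \sum_(i : 'I_n) \sum_(k < n.-1) (h k.+1 - h k) * nth 0 (sorted_row X i) k.

(* Lovasz extension of a set function F (F(set0)=0 assumed by the user):
   f(w) = sum_k w_{j_k} (F{j_1..j_k} - F{j_1..j_{k-1}}) for a non-increasing ordering. *)
Definition lovasz (R : numDomainType) (T : finType) (F : {set T} -> R) (w : T -> R) : R :=
  let s := sort (fun a b : T => w b <= w a) (enum T) in
  \sum_(x <- s) w x * (F [set y in take (index x s).+1 s] - F [set y in take (index x s) s]).

Definition convex_on (R : numDomainType) (T : Type) (B : (T -> R) -> Prop)
    (g : (T -> R) -> R) : Prop :=
  forall X Y t, B X -> B Y -> 0 <= t -> t <= 1 ->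
    g (fun e => t * X e + (1 - t) * Y e) <= t * g X + (1 - t) * g Y.

Definition convex_envelope_on (R : numDomainType) (T : Type) (B : (T -> R) -> Prop)
    (f g : (T -> R) -> R) : Prop :=
  [/\ convex_on B g,
      (forall X, B X -> g X <= f X) &
      (forall phi, convex_on B phi -> (forall X, B X -> phi X <= f X) ->
         forall X, B X -> phi X <= g X)].

Definition linf_ball (R : numDomainType) (T : Type) (X : T -> R) : Prop :=
  forall e, `|X e| <= 1.

Definition piecewise_linear (R : numDomainType) (T : finType) (g : (T -> R) -> R) : Prop :=
  exists cs : seq {ffun T -> R},
    forall X, exists2 c, c \in cs & g X = \sum_(e : T) c e * X e.

(* For each vertex i, sum_k (h(k+1) - h(k)) |X_{i,(k)}| is a weighted sum of the sorted
   absolute entries of row i whose weights are nonnegative and nonincreasing, because h is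
   monotone and concave.  By the rearrangement inequality it dominates the same weighted sum
   taken in any other order, which gives convexity; it is linear once the orderings and the
   signs of the entries are fixed, which gives piecewise linearity.  Expanding F along the
   order of decreasing |X_e| yields the Lovasz extension.  On the unit ball Omega <= F o Supp
   since |X_e| <= [X_e <> 0].  Conversely, if a is the least nonzero |X_e|, then
   X = a sign(X) + (1 - a) Z with Supp Z strictly smaller than Supp X, and
   Omega(X) = a F(Supp X) + (1 - a) Omega(Z); induction on the support shows that every convex
   minorant of F o Supp lies below Omega. *)

From HB Require Import structures.
From mathcomp Require Import all_boot all_order all_algebra.
From mathcomp Require Import lra.
From Stdlib Require Import FunctionalExtensionality.
Set Implicit Arguments. Unset Strict Implicit. Unset Printing Implicit Defensive.
Import Order.TTheory GRing.Theory Num.Theory.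
Local Open Scope ring_scope.

Section OrderedWeightedSum.
Variable R : realDomainType.
Implicit Types (c : nat -> R) (s : seq R).

Fixpoint wsum c s : R :=
  if s is x :: s' then c 0%N * x + wsum (fun k => c k.+1) s' else 0.

Definition ordered_wsum c s := wsum c (sort >=%O s).

Definition incr (g : nat -> R) k := g k.+1 - g k.

Lemma wsumE c s : wsum c s = \sum_(k < size s) c k * s`_k.
Proof.
elim: s c => [|x s IHs] c /=; first by rewrite big_ord0.
by rewrite big_ord_recl IHs.
Qed.

Lemma sort_ge_perm s u : perm_eq s u -> sorted >=%O u -> sort >=%O s = u.
Proof.
move=> su u_sorted; rewrite -(sorted_sort ge_trans u_sorted).
exact/(perm_sortP ge_total ge_trans ge_anti).
Qed.

Section Maps.
Variable T : eqType.
Implicit Types (f g : T -> R) (l : seq T).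

Lemma wsum_mapD c f g l :
  wsum c [seq f x + g x | x <- l] = wsum c (map f l) + wsum c (map g l).
Proof. by elim: l c => [|x l IHl] c /=; rewrite ?addr0 // IHl addrACA mulrDr. Qed.

Lemma wsum_mapZ c a f l : wsum c [seq a * f x | x <- l] = a * wsum c (map f l).
Proof. by elim: l c => [|x l IHl] c /=; rewrite ?mulr0 // IHl mulrDr mulrCA. Qed.

Lemma ler_wsum_map c f g l : (forall k, 0 <= c k) -> {in l, forall x, f x <= g x} ->
  wsum c (map f l) <= wsum c (map g l).
Proof.
elim: l c => [|x l IHl] c c_ge0 fg //=; rewrite lerD ?ler_wpM2l ?fg ?mem_head //.
by apply: IHl => // y yl; rewrite fg // inE yl orbT.
Qed.

Lemma wsum_filterE c (a : pred T) f x0 l :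
  wsum c [seq f x | x <- l & a x] =
  \sum_(p < size l) f (nth x0 l p) * ((a (nth x0 l p))%:R * c (count a (take p l))).
Proof.
elim: l c => [|x l IHl] c /=; first by rewrite big_ord0.
rewrite big_ord_recl /=; case: (a x) => /=.
  by rewrite (IHl (fun k => c k.+1)) mul1r mulrC.
by rewrite (IHl c) mul0r mulr0 add0r.
Qed.

Lemma wsum_map_index c f l : uniq l -> wsum c (map f l) = \sum_(x <- l) c (index x l) * f x.
Proof.
elim: l c => [|x l IHl] c /=; first by rewrite big_nil.
case/andP => x_notin l_uniq; rewrite big_cons /= eqxx (IHl _ l_uniq); congr (_ + _).
by apply: eq_big_seq => y yl; rewrite ifN //; apply: contraNneq x_notin => ->.
Qed.

End Maps.

Lemma wsum_le_sort_cons c x s : (forall k, c k.+1 <= c k) -> sorted >=%O s ->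
  wsum c (x :: s) <= wsum c (sort >=%O (x :: s)).
Proof.
elim: s c x => [|y s IHs] c' x c'_decr s_sorted.
  by rewrite (sorted_sort ge_trans).
have [yx | xy] := leP y x; first by rewrite (sorted_sort ge_trans) //= {1}/Order.ge /= yx.
move: s_sorted; rewrite /= path_sortedE => [/andP[ys s_sorted]|]; last exact: ge_trans.
have -> : sort >=%O [:: x, y & s] = y :: sort >=%O (x :: s).
  apply: sort_ge_perm.
    apply: (@perm_trans _ [:: y, x & s]); last by rewrite perm_cons perm_sym perm_sort.
    by apply/permP => p /=; rewrite addnCA.
  rewrite /= path_sortedE ?sort_sorted ?andbT; [|exact: ge_total|exact: ge_trans].
  by rewrite all_sort /= (ltW xy).
have := IHs (fun k => c' k.+1) x (fun k => c'_decr k.+1) s_sorted.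
have : 0 <= (c' 0%N - c' 1%N) * (y - x) by rewrite mulr_ge0 // subr_ge0 // ltW.
rewrite /=; lra.
Qed.

Lemma wsum_le_sort c s : (forall k, c k.+1 <= c k) -> wsum c s <= wsum c (sort >=%O s).
Proof.
elim: s c => [|x s IHs] c' c'_decr //=.
apply: le_trans (_ : c' 0%N * x + wsum (fun k => c' k.+1) (sort >=%O s) <= _).
  by rewrite lerD2l IHs.
apply: le_trans (wsum_le_sort_cons x c'_decr (sort_sorted ge_total s)) _.
suff -> : sort >=%O (x :: sort >=%O s) = sort >=%O (x :: s) by [].
by apply/(perm_sortP ge_total ge_trans ge_anti); rewrite perm_cons perm_sort.
Qed.

Lemma wsum_le_ordered c s u : (forall k, c k.+1 <= c k) -> perm_eq s u ->
  wsum c s <= ordered_wsum c u.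
Proof.
move=> c_decr su; apply: le_trans (wsum_le_sort s c_decr) _.
by rewrite (perm_sortP ge_total ge_trans ge_anti _ _ su).
Qed.

Lemma sort_ge_map_homo (f : R -> R) s : {in s &, {homo f : x y / x <= y}} ->
  sort >=%O (map f s) = map f (sort >=%O s).
Proof.
move=> f_homo; apply: sort_ge_perm; first by rewrite perm_map // perm_sym perm_sort.
apply: (@homo_sorted_in _ _ (mem s)); last exact: sort_sorted ge_total s.
  by move=> x y xs ys yx; apply: f_homo.
by apply/allP => x; rewrite mem_sort.
Qed.

Lemma ordered_wsumZ c t s : 0 <= t -> ordered_wsum c [seq t * x | x <- s] = t * ordered_wsum c s.
Proof.
move=> t_ge0; rewrite /ordered_wsum sort_ge_map_homo ?wsum_mapZ ?map_id //.
by move=> x y _ _ xy; rewrite ler_wpM2l.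
Qed.

Lemma indicator_homo s : {in s, forall y, 0 <= y} ->
  {in s &, {homo (fun y : R => (y != 0)%:R : R) : x y / x <= y}}.
Proof.
move=> s_ge0 x y xs ys xy /=; have [_|x_neq0] := eqVneq x 0; first by rewrite ler0n.
by rewrite gt_eqF // (lt_le_trans _ xy) // lt_neqAle eq_sym x_neq0 s_ge0.
Qed.

Lemma wsum_incr_indicator g s : sorted >=%O s -> {in s, forall y, 0 <= y} ->
  wsum (incr g) [seq (y != 0)%:R | y <- s] = g (count (predC1 0) s) - g 0%N.
Proof.
elim: s g => [|x s IHs] g /=; first by rewrite subrr.
rewrite path_sortedE; last exact: ge_trans.
move=> /andP[x_ge_s s_sorted] xs_ge0.
have s_ge0 : {in s, forall y, 0 <= y} by move=> y ys; rewrite xs_ge0 // inE ys orbT.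
have [x0|x_neq0] := eqVneq x 0.
  have s0 : {in s, forall y, y = 0}.
    by move=> y ys; apply/le_anti; rewrite s_ge0 // -x0 andbT; apply: (allP x_ge_s).
  have -> : [seq (y != 0)%:R | y <- s] = [seq 0 * y | y <- s] :> seq R.
    by apply/eq_in_map => y /s0 ->; rewrite eqxx mul0r.
  rewrite mulr0 add0r wsum_mapZ mul0r (eq_in_count (a2 := pred0)) => [|y /s0 -> /=].
    by rewrite count_pred0 subrr.
  by rewrite eqxx.
rewrite mulr1 (IHs (fun k => g k.+1)) // /incr add1n; lra.
Qed.

Lemma ordered_wsum_indicator g s : {in s, forall y, 0 <= y} ->
  ordered_wsum (incr g) [seq (y != 0)%:R | y <- s] = g (count (predC1 0) s) - g 0%N.
Proof.
move=> s_ge0; rewrite /ordered_wsum sort_ge_map_homo; last exact: indicator_homo.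
rewrite wsum_incr_indicator ?(sort_sorted ge_total) //; last first.
  by move=> y; rewrite mem_sort; apply: s_ge0.
by rewrite (permP (permEl (perm_sort _ s))).
Qed.

Lemma ordered_wsum_le_indicator c s : (forall k, 0 <= c k) -> {in s, forall y, 0 <= y <= 1} ->
  ordered_wsum c s <= ordered_wsum c [seq (y != 0)%:R | y <- s].
Proof.
move=> c_ge0 s01; rewrite /ordered_wsum sort_ge_map_homo; last first.
  by apply: indicator_homo => y /s01 /andP[].
rewrite -{1}[sort _ s]map_id; apply: ler_wsum_map => // y; rewrite mem_sort.
by have [->|_ /s01 /andP[]] := eqVneq y 0.
Qed.

Lemma ordered_wsum_split c a s : 0 <= a -> {in s, forall y, (y == 0) || (a <= y)} ->
  ordered_wsum c s = a * ordered_wsum c [seq (y != 0)%:R | y <- s]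
                     + ordered_wsum c [seq Num.max (y - a) 0 | y <- s].
Proof.
move=> a_ge0 s_cases.
have s_ge0 : {in s, forall y, 0 <= y} by move=> y /s_cases /orP[/eqP ->|/(le_trans a_ge0)].
rewrite /ordered_wsum !sort_ge_map_homo; first last.
- exact: indicator_homo.
- by move=> x y _ _ xy; rewrite le_max2 ?lerD2r.
rewrite -wsum_mapZ -wsum_mapD; congr wsum; rewrite -[LHS]map_id; apply/eq_in_map => y.
rewrite mem_sort => ys; have [->|y_neq0] := eqVneq y 0.
  by rewrite mulr0 add0r sub0r max_r // oppr_le0.
move: (s_cases y ys); rewrite (negbTE y_neq0) /= => ay.
by rewrite mulr1 max_l ?subr_ge0 // addrC subrK.
Qed.

Lemma ordered_wsum_norm_convex (T : eqType) c (l : seq T) (X Y : T -> R) t :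
  (forall k, 0 <= c k) -> (forall k, c k.+1 <= c k) -> 0 <= t <= 1 ->
  ordered_wsum c [seq `|t * X x + (1 - t) * Y x| | x <- l] <=
  t * ordered_wsum c [seq `|X x| | x <- l] + (1 - t) * ordered_wsum c [seq `|Y x| | x <- l].
Proof.
move=> c_ge0 c_decr /andP[t_ge0 t_le1].
rewrite {1}/ordered_wsum sort_map; set l' := sort _ l.
have l'l : perm_eq l' l by rewrite perm_sort.
apply: le_trans (ler_wsum_map (g := fun x => t * `|X x| + (1 - t) * `|Y x|) c_ge0 _) _.
  move=> x _; apply: le_trans (ler_normD _ _) _.
  by rewrite !normrM (ger0_norm t_ge0) (@ger0_norm _ (1 - t)) ?subr_ge0.
rewrite wsum_mapD !wsum_mapZ lerD // ler_wpM2l ?subr_ge0 //;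
  by apply: wsum_le_ordered; rewrite // perm_map.
Qed.

End OrderedWeightedSum.

Section CompleteGraph.
Variable n : nat.
Implicit Types (i j v : 'I_n) (e : edge n) (E : {set edge n}).

Definition incident v e := ((val e).1 == v) || ((val e).2 == v).

Definition edges_at v := [seq e <- enum {: edge n} | incident v e].

Definition other v e := if (val e).1 == v then (val e).2 else (val e).1.

Definition oedge i j : option (edge n) :=
  if (i < j)%N then insub (i, j) : option (edge n) else insub (j, i) : option (edge n).

Lemma entryE (R : numDomainType) (X : edge n -> R) i j : entry X i j = oapp X 0 (oedge i j).
Proof. by rewrite /entry /oedge; case: ifP. Qed.

Lemma isSome_oedge v j : oedge v j = (j != v) :> bool.
Proof.
rewrite /oedge; case: ltngtP => [vj|jv|/val_inj->]; last by rewrite insubF ?ltnn ?eqxx.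
  by rewrite insubT // eq_sym neq_ltn vj.
by rewrite insubT // neq_ltn jv.
Qed.

Lemma oedgeK v : ocancel (oedge v) (other v).
Proof.
move=> j; rewrite /oedge /other; case: ltngtP => [vj|jv|/val_inj->]; last by rewrite insubF ?ltnn.
  by rewrite insubT /= eqxx.
by rewrite insubT /= ifN // neq_ltn jv.
Qed.

Lemma oedge_incident v j e : oedge v j = Some e -> incident v e.
Proof.
rewrite /oedge /incident; case: ltngtP => [vj|jv|/val_inj->]; last by rewrite insubF ?ltnn.
  by rewrite insubT => -[<-] /=; rewrite eqxx.
by rewrite insubT => -[<-] /=; rewrite eqxx orbT.
Qed.

Lemma oedge_other v e : incident v e -> oedge v (other v e) = Some e.
Proof.
case: e => [[a b] /= ab]; rewrite /incident /other /oedge /=.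
have [<- _|a_neq_v /= /eqP b_eq_v] := eqVneq a v.
  by rewrite ab insubT; congr Some; apply: val_inj.
by rewrite -b_eq_v ltnNge (ltnW ab) /= insubT; congr Some; apply: val_inj.
Qed.

Lemma uniq_edges_at v : uniq (edges_at v).
Proof. by rewrite filter_uniq ?enum_uniq. Qed.

Lemma perm_pmap_oedge v : perm_eq (pmap (oedge v) (enum 'I_n)) (edges_at v).
Proof.
apply: uniq_perm; [exact: pmap_uniq (@oedgeK v) _ (enum_uniq _)|exact: uniq_edges_at|].
move=> e; rewrite mem_pmap mem_filter mem_enum andbT.
apply/mapP/idP => [[j _ /esym /oedge_incident] //|/oedge_other oe].
by exists (other v e); rewrite ?mem_enum.
Qed.

Lemma perm_row_edges_at (R : numDomainType) (X : edge n -> R) v :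
  perm_eq [seq `|entry X v j| | j <- enum 'I_n & j != v] [seq `|X e| | e <- edges_at v].
Proof.
have -> : [seq `|entry X v j| | j <- enum 'I_n & j != v] =
          [seq `|X e| | e <- pmap (oedge v) (enum 'I_n)].
  rewrite -(eq_filter (isSome_oedge v)).
  transitivity [seq oapp (fun e => `|X e|) 0 o
                  | o <- [seq Some e | e <- pmap (oedge v) (enum 'I_n)]].
    rewrite pmapS_filter -map_comp; apply: eq_map => j /=.
    by rewrite entryE; case: oedge => //=; rewrite normr0.
  by elim: (pmap _ _) => //= e l ->.
by rewrite perm_map // perm_pmap_oedge.
Qed.

Lemma deg_count E v : deg E v = count (mem E) (edges_at v).
Proof.
rewrite -size_filter -(card_uniqP _); last by rewrite filter_uniq ?uniq_edges_at.
by apply: eq_card => e; rewrite in_set 2!mem_filter mem_enum andbT andbC.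
Qed.

Lemma deg_set_seq (l : seq (edge n)) v : uniq l -> deg [set x in l] v = count (incident v) l.
Proof.
move=> l_uniq; rewrite /deg -size_filter -(card_uniqP (filter_uniq _ l_uniq)).
by apply: eq_card => e; rewrite !inE mem_filter andbC.
Qed.

End CompleteGraph.

Lemma normr_subr_sg (R : realDomainType) (x a : R) : 0 <= a -> (x == 0) || (a <= `|x|) ->
  `|x - a * Num.sg x| = Num.max (`|x| - a) 0.
Proof.
move=> a_ge0; have [-> _|x_neq0 /= ax] := eqVneq x 0.
  by rewrite sgr0 mulr0 subr0 normr0 sub0r max_r // oppr_le0.
rewrite -{1}(mulr_sg_norm x) (mulrC a) -mulrBr normrM normr_sg x_neq0 mul1r.
by rewrite ger0_norm ?max_l // subr_ge0.
Qed.

Lemma bounded_rescale (R : realFieldType) (a p : R) :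
  `|p| <= a -> a * (a^-1 * p) = p /\ `|a^-1 * p| <= 1.
Proof.
move=> pa; have [a0|a_neq0] := eqVneq a 0.
  by move: pa; rewrite a0 normr_le0 => /eqP ->; rewrite !mulr0 normr0.
have a_gt0 : 0 < a by rewrite lt_neqAle eq_sym a_neq0 (le_trans _ pa).
split; first by rewrite mulrA mulfV ?mul1r.
by rewrite normrM ger0_norm ?invr_ge0 ?(ltW a_gt0) // mulrC ler_pdivrMr ?mul1r.
Qed.

Lemma linf_ball_sg (R : realDomainType) (T : Type) (X : T -> R) :
  linf_ball (fun e => Num.sg (X e)).
Proof. by move=> e; rewrite normr_sg; case: (_ != 0). Qed.

Section Omega.
Variables (R : realFieldType) (n : nat) (h : nat -> R).
Implicit Types (X Y Z : edge n -> R) (v : 'I_n) (e : edge n).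

Lemma size_sorted_row X v : size (sorted_row X v) = n.-1.
Proof.
rewrite size_sort size_map size_filter -[in RHS](size_enum_ord n).
by rewrite -(count_predC (pred1 v)) count_uniq_mem ?enum_uniq // mem_enum.
Qed.

Lemma OmegaE X : Omega h X = \sum_v ordered_wsum (incr h) [seq `|X e| | e <- edges_at v].
Proof.
apply: eq_bigr => v _; rewrite /ordered_wsum wsumE.
have -> : sort >=%O [seq `|X e| | e <- edges_at v] = sorted_row X v.
  exact/esym/(perm_sortP ge_total ge_trans ge_anti)/perm_row_edges_at.
by rewrite size_sorted_row.
Qed.

Lemma Omega_scale X t : 0 <= t -> Omega h (fun e => t * X e) = t * Omega h X.
Proof.
move=> t_ge0; rewrite !OmegaE mulr_sumr; apply: eq_bigr => v _.
rewrite -ordered_wsumZ // -map_comp; congr ordered_wsum; apply: eq_map => e /=.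
by rewrite normrM ger0_norm.
Qed.

Hypothesis h0 : h 0%N = 0.
Hypothesis h_incr : forall k, h k <= h k.+1.
Hypothesis h_concave : forall k, h k.+2 - h k.+1 <= h k.+1 - h k.

Lemma incr_ge0 k : 0 <= incr h k.
Proof. by rewrite subr_ge0. Qed.

Lemma Omega_convex : convex_on (fun _ => True) (@Omega R n h).
Proof.
move=> X Y t _ _ t_ge0 t_le1; rewrite !OmegaE !mulr_sumr -big_split; apply: ler_sum => v _.
by apply: ordered_wsum_norm_convex; rewrite ?t_ge0 //; apply: incr_ge0.
Qed.

Lemma ordered_wsum_support_at X v :
  ordered_wsum (incr h) [seq (y != 0)%:R | y <- [seq `|X e| | e <- edges_at v]]
  = h (deg (supp X) v).
Proof.
rewrite ordered_wsum_indicator; last by move=> y /mapP[e _ ->].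
rewrite h0 subr0 deg_count count_map; congr h; apply: eq_count => e /=.
by rewrite normr_eq0 inE.
Qed.

Lemma Omega_le_Fdeg X : linf_ball X -> Omega h X <= Fdeg h (supp X).
Proof.
move=> X_ball; rewrite OmegaE; apply: ler_sum => v _.
rewrite -ordered_wsum_support_at; apply: ordered_wsum_le_indicator; first exact: incr_ge0.
by move=> y /mapP[e _ ->]; rewrite normr_ge0 X_ball.
Qed.

Lemma Omega_peel X a : 0 <= a -> (forall e, X e != 0 -> a <= `|X e|) ->
  Omega h X = a * Fdeg h (supp X) + Omega h (fun e => X e - a * Num.sg (X e)).
Proof.
move=> a_ge0 X_ge_a.
have X_cases e : (X e == 0) || (a <= `|X e|) by case: eqP => //= /eqP; apply: X_ge_a.
rewrite !OmegaE /Fdeg mulr_sumr -big_split; apply: eq_bigr => v _ /=.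
rewrite (ordered_wsum_split _ a_ge0); last by move=> y /mapP[e _ ->]; rewrite normr_eq0.
rewrite ordered_wsum_support_at -map_comp; congr (_ + ordered_wsum _ _).
by apply: eq_map => e /=; rewrite normr_subr_sg.
Qed.

Lemma lovasz_Fdeg_sum (w : edge n -> R) (s : seq (edge n)) : uniq s ->
  \sum_(x <- s) w x * (Fdeg h [set y in take (index x s).+1 s]
                       - Fdeg h [set y in take (index x s) s])
  = \sum_v wsum (incr h) [seq w e | e <- s & incident v e].
Proof.
case: s => [|x0 s'] s_uniq; first by rewrite big_nil big1.
rewrite (big_nth x0) big_mkord.
transitivity (\sum_(p < size (x0 :: s')) \sum_v w (nth x0 (x0 :: s') p) *
    ((incident v (nth x0 (x0 :: s') p))%:R * incr h (count (incident v) (take p (x0 :: s'))))).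
  apply: eq_bigr => p _; rewrite index_uniq // /Fdeg -sumrB mulr_sumr; apply: eq_bigr => v _.
  rewrite !deg_set_seq ?take_uniq // (take_nth x0) // -cats1 count_cat /= addn0.
  by case: incident; rewrite /incr ?addn1 ?addn0 ?subrr ?mul1r ?mul0r.
by rewrite exchange_big; apply: eq_bigr => v _; rewrite (wsum_filterE _ _ _ x0).
Qed.

Lemma Omega_lovasz X : Omega h X = lovasz (Fdeg h) (fun e => `|X e|).
Proof.
rewrite OmegaE /lovasz lovasz_Fdeg_sum ?sort_uniq ?enum_uniq //; apply: eq_bigr => v _.
rewrite /ordered_wsum sort_map filter_sort //.
  by move=> e1 e2; apply: le_total.
by move=> e1 e2 e3 /= e12 e23; apply: le_trans e23 e12.
Qed.

Lemma Omega_rankE X : Omega h X = \sum_e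
  (\sum_(v | incident v e) incr h (index e (sort (relpre (fun e => `|X e|) >=%O) (edges_at v))))
  * `|X e|.
Proof.
rewrite OmegaE (eq_bigr (fun v => \sum_(e | incident v e)
    incr h (index e (sort (relpre (fun e => `|X e|) >=%O) (edges_at v))) * `|X e|)).
  by rewrite (exchange_big_dep xpredT) //; apply: eq_bigr => e _; rewrite mulr_suml.
move=> v _; rewrite /ordered_wsum sort_map wsum_map_index ?sort_uniq ?uniq_edges_at //.
by rewrite (perm_big (edges_at v)) ?perm_sort // big_filter big_enum_cond.
Qed.

(* [r (v, e)] is the rank of [e] among the edges at [v] sorted by decreasing [|X e|], and
   [b e] the sign of [X e]: these finitely many data determine the linear piece of Omega at [X]. *)
Definition Omega_coef (r : {ffun 'I_n * edge n -> 'I_#|{: edge n}|.+1}) (b : {ffun edge n -> bool})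
  : {ffun edge n -> R} := [ffun e => (-1) ^+ b e * \sum_(v | incident v e) incr h (r (v, e))].

Lemma Omega_piecewise_linear : piecewise_linear (@Omega R n h).
Proof.
exists [seq Omega_coef rb.1 rb.2 | rb <- enum {: {ffun 'I_n * edge n -> 'I_#|{: edge n}|.+1}
                                                 * {ffun edge n -> bool}}].
move=> X; pose rank v := sort (relpre (fun e => `|X e|) >=%O) (edges_at v).
pose r : {ffun 'I_n * edge n -> 'I_#|{: edge n}|.+1} :=
  [ffun ve => inord (index ve.2 (rank ve.1))].
pose b := [ffun e => X e < 0].
exists (Omega_coef r b); first by apply/mapP; exists (r, b); rewrite ?mem_enum.
rewrite Omega_rankE; apply: eq_bigr => e _; rewrite !ffunE normrEsign mulrA; congr (_ * _).
rewrite mulrC; congr (_ * _); apply: eq_bigr => v _; rewrite ffunE inordK //=.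
by rewrite ltnS (leq_trans (index_size _ _)) // size_sort size_filter cardT count_size.
Qed.

Lemma supp_sg X : supp (fun e => Num.sg (X e)) = supp X.
Proof. by apply/setP => e; rewrite !inE sgr_eq0. Qed.

Lemma Fdeg_set0 : Fdeg h (set0 : {set edge n}) = 0.
Proof.
rewrite /Fdeg big1 // => v _; rewrite -[RHS]h0; congr h.
by apply/eqP; rewrite cards_eq0; apply/eqP/setP => e; rewrite !inE.
Qed.

Lemma linf_ball_decomposition X : linf_ball X -> supp X != set0 ->
  exists a Z, [/\ 0 < a <= 1, linf_ball Z, (#|supp Z| < #|supp X|)%N,
    X = (fun e => a * Num.sg (X e) + (1 - a) * Z e)
    & Omega h X = a * Fdeg h (supp X) + (1 - a) * Omega h Z].
Proof.
move=> X_ball /set0Pn[e0 e0X].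
have [e1 e1X e1_min] := arg_minP (fun e => `|X e|) e0X.
set a := `|X e1|; have a_le1 : a <= 1 := X_ball e1.
have a_gt0 : 0 < a by have : e1 \in supp X := e1X; rewrite inE normr_gt0.
have X_ge_a e : X e != 0 -> a <= `|X e|.
  by move=> Xe; apply: (e1_min e); rewrite [_ _ e]inE.
pose P e := X e - a * Num.sg (X e).
have P_le e : `|P e| <= 1 - a.
  rewrite normr_subr_sg ?(ltW a_gt0) //; last by case: eqP => //= /eqP /X_ge_a.
  by rewrite ge_max lerD2r X_ball subr_ge0.
pose Z e := (1 - a)^-1 * P e.
have PZ e : (1 - a) * Z e = P e := (bounded_rescale (P_le e)).1.
exists a, Z; split.
- by rewrite a_gt0.
- by move=> e; apply: (bounded_rescale (P_le e)).2.
- apply/proper_card/properP; split.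
    apply/subsetP => e; rewrite !inE; apply: contraNN => /eqP Xe0.
    by rewrite /Z /P Xe0 sgr0 mulr0 subr0 mulr0.
  by exists e1 => //; rewrite inE negbK /Z /P /a (mulrC `|X e1|) mulr_sg_norm subrr mulr0.
- by apply: functional_extensionality => e; rewrite PZ /P addrC subrK.
rewrite (Omega_peel (ltW a_gt0) X_ge_a) -Omega_scale ?subr_ge0 //.
by congr (_ + Omega h _); apply: functional_extensionality => e; rewrite PZ.
Qed.

Lemma Omega_ge_convex_minorant (phi : (edge n -> R) -> R) :
  convex_on (@linf_ball R (edge n)) phi -> (forall X, linf_ball X -> phi X <= Fdeg h (supp X)) ->
  forall X, linf_ball X -> phi X <= Omega h X.
Proof.
move=> phi_convex phi_le_F X.
have [m] := ubnP #|supp X|; elim: m X => // m IHm X supp_lt X_ball.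
have [X0|X_neq0] := eqVneq (supp X) set0.
  suff -> : Omega h X = 0 by rewrite (le_trans (phi_le_F X X_ball)) // X0 Fdeg_set0.
  rewrite [X in Omega h X](_ : X = fun e => 0 * X e) ?Omega_scale ?mul0r //.
  apply: functional_extensionality => e; rewrite mul0r; apply/eqP.
  by apply: contraT => Xe; move: X0 => /setP /(_ e); rewrite !inE Xe.
have [a [Z [/andP[a_gt0 a_le1] Z_ball supp_lt_Z X_eq ->]]] := linf_ball_decomposition X_ball X_neq0.
rewrite {1}X_eq; apply: le_trans (phi_convex _ _ a (linf_ball_sg X) Z_ball (ltW a_gt0) a_le1) _.
apply: lerD; apply: ler_wpM2l; rewrite ?subr_ge0 ?(ltW a_gt0) //.
  by rewrite -supp_sg; apply/phi_le_F/linf_ball_sg.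
by apply: IHm Z_ball; apply: leq_trans supp_lt_Z _; rewrite -ltnS.
Qed.

End Omega.

Theorem proposition2 (R : realFieldType) (n : nat) (h : nat -> R) :
  (2 <= n)%N ->
  h 0%N = 0 ->
  (forall k : nat, h k <= h k.+1) ->
  (forall k : nat, h k.+2 - h k.+1 <= h k.+1 - h k) ->
  [/\ convex_envelope_on (@linf_ball R (edge n))
        (fun X => Fdeg h (supp X)) (@Omega R n h),
      (forall X : edge n -> R, @Omega R n h X = lovasz (@Fdeg R n h) (fun e => `|X e|)),
      convex_on (fun _ => True) (@Omega R n h) &
      piecewise_linear (@Omega R n h)].
Proof.
move=> _ h0 h_incr h_concave; split.
- split.
  + by move=> X Y t _ _; apply: Omega_convex.
  + by move=> X; apply: Omega_le_Fdeg.
  + by move=> phi; apply: Omega_ge_convex_minorant.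
- exact: Omega_lovasz.
- exact: Omega_convex.
- exact: Omega_piecewise_linear.
Qed.
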